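(* Let $k$ be an algebraically closed field, let $\lambda$ be a partition of $n$ (with $\lambda_j=0$ beyond its length), and let $\mathcal O_\lambda\subseteq\mathfrak{gl}_n(k)$ be the nilpotent orbit of matrices with Jordan block sizes $\lambda$. For each $i\in\{1,\dots,n-1\}$ there exists $X\in\mathcal O_\lambda$ such that $X_{\le i,\le i}$ has stable rank exactly $d_{\lambda,i}:=i-\sum_{j>n-i}\lambda_j$.
   Context: $X_{\le i,\le i}$ is the submatrix of the first $i$ rows and columns. For an $i\times i$ matrix $Y$, $s_j(Y)$ is the sum of the principal $j\times j$ minors of $Y$; the stable rank of $Y$ is the largest $j$ with $s_j(Y)\ne0$, equivalently the number of nonzero eigenvalues counted with algebraic multiplicity. *)

From HB Require Import structures.
From mathcomp Require Import all_boot all_order all_algebra.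
Set Implicit Arguments. Unset Strict Implicit. Unset Printing Implicit Defensive.
Import Order.TTheory GRing.Theory Num.Theory.
Local Open Scope ring_scope.

Definition is_partition (n : nat) (la : seq nat) : bool :=
  [&& sorted geq la, 0%N \notin la & sumn la == n].

Definition block_starts (la : seq nat) : seq nat :=
  [seq sumn (take t la) | t <- iota 0 (size la).+1].

(* The nilpotent Jordan matrix with blocks of sizes la_1, la_2, ... along the
   diagonal (ones on the superdiagonal inside each block). *)
Definition jordan_nil (k : nzRingType) (n : nat) (la : seq nat) : 'M[k]_n :=
  \matrix_(a < n, b < n)
    (if (b == a.+1 :> nat) && (nat_of_ord b \notin block_starts la) then 1 else 0).

Definition nil_orbit (k : fieldType) (n : nat) (la : seq nat) (X : 'M[k]_n) : Prop :=
  exists2 P : 'M[k]_n, P \in unitmx & X = P *m jordan_nil k n la *m invmx P.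

Definition lead_submx (k : Type) (n i : nat) (h : (i <= n)%N) (X : 'M[k]_n) : 'M[k]_i :=
  \matrix_(a < i, b < i) X (widen_ord h a) (widen_ord h b).

Definition principal_minor (k : comNzRingType) (m : nat) (Y : 'M[k]_m) (S : {set 'I_m}) : k :=
  \det (\matrix_(a < #|S|, b < #|S|) Y (enum_val a) (enum_val b)).

Definition sum_pminors (k : comNzRingType) (m : nat) (Y : 'M[k]_m) (j : nat) : k :=
  \sum_(S : {set 'I_m} | #|S| == j) principal_minor Y S.

(* stable rank: the largest j with s_j(Y) != 0 (s_0 = 1, and s_j = 0 for j > m). *)
Definition stable_rank (k : comNzRingType) (m : nat) (Y : 'M[k]_m) : nat :=
  \max_(j < m.+1 | sum_pminors Y j != 0) j.

(* d_{la,i} = i - sum_{j > n - i} la_j   (la_j 1-indexed, 0 beyond the length) *)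
Definition d_lam (n : nat) (la : seq nat) (i : nat) : nat :=
  (i - \sum_(n - i <= t < n) nth 0%N la t)%N.

(* The Jordan block J_m is conjugate, by the reversed Pascal matrix
   ('C(m-1-b, m-1-a))_{a,b}, to a matrix whose principal submatrix on the
   indices 1, ..., m-1 is upper unitriangular; the price is a dense first
   column.  The Pascal matrix is unitriangular with integer entries, so this
   works in every characteristic.
   Conjugating J_la block by block, each block either is kept whole (it is
   strictly upper triangular, so it contributes no nonzero diagonal entry), or
   loses its first r >= 1 indices and keeps m - r indices on which the twisted
   block is unitriangular.  Dropping o = n - i indices, at least one from each
   of the first min(o, length la) blocks, leaves i indices on which the
   conjugate is upper triangular with la_1 + ... + la_o - o = d_{la,i} nonzero
   diagonal entries.  A permutation moves these indices to the front, and the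
   stable rank of a triangular matrix is its number of nonzero diagonal
   entries, since s_j is then the j-th elementary symmetric function of the
   diagonal. *)
From HB Require Import structures.
From mathcomp Require Import all_boot all_order all_algebra all_fingroup.
From mathcomp Require Import zify ring.
Set Implicit Arguments. Unset Strict Implicit. Unset Printing Implicit Defensive.
Import Order.TTheory GRing.Theory Num.Theory.
Local Open Scope ring_scope.

Lemma size_le_sumn (l : seq nat) : 0%N \notin l -> (size l <= sumn l)%N.
Proof.
elim: l => [|m l IHl] //=; rewrite inE negb_or eq_sym => /andP [m_gt0 /IHl].
by rewrite -lt0n in m_gt0; lia.
Qed.

Lemma leq_sumn_take (l : seq nat) j :
  0%N \notin l -> (j <= sumn l)%N -> (j <= sumn (take j l))%N.
Proof.
elim: l j => [|m l IHl] [|j] //=; rewrite inE negb_or eq_sym => /andP [m_gt0 l0] le_j.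
rewrite -lt0n in m_gt0; have [le_jl | lt_lj] := leqP j (sumn l).
  by have := IHl j l0 le_jl; lia.
by rewrite take_oversize //; have := size_le_sumn l0; lia.
Qed.

Lemma sumn_nth (s : seq nat) N :
  (size s <= N)%N -> sumn s = (\sum_(0 <= t < N) nth 0 s t)%N.
Proof.
elim: s N => [|x s IHs] N le_sN.
  by rewrite big1_seq // => t; rewrite nth_nil.
case: N le_sN => [//|N] le_sN.
by rewrite big_nat_recl //= (IHs N).
Qed.

Lemma sumn_drop (s : seq nat) o N : (size s <= N)%N -> (o <= N)%N ->
  sumn (drop o s) = (\sum_(o <= t < N) nth 0 s t)%N.
Proof.
move=> le_sN le_oN; rewrite (@sumn_nth _ (N - o)); last by rewrite size_drop; lia.
by rewrite -[o in RHS]add0n big_addn; apply: eq_bigr => t _; rewrite nth_drop addnC.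
Qed.

Lemma enum_val_ltn n (K : {set 'I_n}) (a b : 'I_#|K|) :
  (a < b)%N -> (enum_val a < enum_val b)%N.
Proof.
have sortedK : sorted ltn (map val (enum K)).
  rewrite -[enum _](eq_filter (mem_enum _)) -(eq_filter (mem_map val_inj _)) -filter_map.
  by rewrite (sorted_filter ltn_trans) // unlock val_ord_enum iota_ltn_sorted.
have sizeK : size (map val (enum K)) = #|K| by rewrite size_map -cardE.
move=> lt_ab; have := sorted_ltn_nth ltn_trans 0%N sortedK a b.
rewrite !inE sizeK !ltn_ord => /(_ isT isT lt_ab).
by rewrite !(nth_map (enum_val a)) -?cardE // -!enum_val_nth.
Qed.

Lemma perm_enum_val n (K : {set 'I_n}) :
  exists s : 'S_n, forall (a : 'I_n) (lt_aK : (a < #|K|)%N), s a = enum_val (Ordinal lt_aK).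
Proof.
pose L := enum K ++ enum (~: K).
have sizeL : size L = n by rewrite size_cat -!cardE cardsC card_ord.
have uniqL : uniq L.
  by rewrite cat_uniq !enum_uniq andbT /=; apply/hasPn => x; rewrite !mem_enum inE.
have nthL_inj : injective (fun a : 'I_n => nth a L a).
  move=> a b eq_ab; apply/val_inj/eqP.
  rewrite -(nth_uniq a _ _ uniqL) ?sizeL ?ltn_ord // eq_ab.
  by rewrite [nth a _ _](set_nth_default b) ?sizeL ?ltn_ord //; apply/eqP.
exists (perm nthL_inj) => a lt_aK.
by rewrite permE nth_cat -cardE lt_aK (enum_val_nth a).
Qed.

Definition block_set m n (A : {set 'I_m}) (B : {set 'I_n}) : {set 'I_(m + n)} :=
  [set a | match split a with inl x => x \in A | inr y => y \in B end].

Lemma card_block_set m n (A : {set 'I_m}) (B : {set 'I_n}) :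
  #|block_set A B| = (#|A| + #|B|)%N.
Proof.
rewrite -!sum1_card big_split_ord /=.
by congr (_ + _)%N; apply: eq_bigl => x;
  rewrite inE ?(unsplitK (inl _)) ?(unsplitK (inr _)).
Qed.

Definition jordan_block (k : nzRingType) m : 'M[k]_m :=
  \matrix_(a, b) (b == a.+1 :> nat)%:R.

Section JordanBlock.
Variable k : comNzRingType.

Definition pascal_mx M : 'M[k]_M.+1 := \matrix_(a, b) 'C(M - b, M - a)%:R.

Definition twisted_jordan_block M : 'M[k]_M.+1 :=
  \matrix_(a, c) if c == 0 :> nat then (a == 0 :> nat)%:R - 'C(M.+1, M - a)%:R
                 else ((c == a :> nat) || (c == a.+1 :> nat))%:R.

Lemma sum_ord_indicator m x (F : nat -> k) :
  \sum_(c < m) (c == x :> nat)%:R * F c = (x < m)%:R * F x.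
Proof.
rewrite (eq_bigr (fun c : 'I_m => if c == x :> nat then F c else 0)); last first.
  by move=> c _; case: eqP; rewrite ?mul1r ?mul0r.
by rewrite -big_mkcond big_ord1_eq; case: ltnP; rewrite ?mul1r ?mul0r.
Qed.

Lemma pascal_jordan_blockE M (a b : 'I_M.+1) :
  (pascal_mx M *m jordan_block k M.+1) a b = (0 < b)%:R * 'C((M - b).+1, M - a)%:R.
Proof.
have -> : (0 < b)%:R * 'C((M - b).+1, M - a)%:R =
          (b.-1 < M.+1)%:R * ((0 < b)%:R * 'C(M - b.-1, M - a)%:R) :> k.
  case: b => [[|b] hb] /=; first by rewrite !mul0r mulr0.
  by rewrite (ltnW hb) !mul1r subnSK.
rewrite mxE -(sum_ord_indicator _ _ (fun c => (0 < b)%:R * 'C(M - c, M - a)%:R)).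
apply: eq_bigr => c _; rewrite !mxE.
case: b => [[|b] hb] /=; first by rewrite mulr0 !mul0r mulr0.
by rewrite eqSS eq_sym mul1r mulrC.
Qed.

Lemma twisted_jordan_block_pascalE M (a b : 'I_M.+1) :
  (twisted_jordan_block M *m pascal_mx M) a b =
    ((a == 0 :> nat)%:R - 'C(M.+1, M - a)%:R) * 'C(M - b, M)%:R
    + (0 < a)%:R * 'C(M - b, M - a)%:R + (a < M)%:R * 'C(M - b, (M - a).-1)%:R.
Proof.
rewrite !mxE big_ord_recl !mxE /= subn0 -addrA; congr (_ + _).
under eq_bigr => c _ do rewrite !mxE /= /bump /= add1n.
rewrite (eq_bigr (fun c : 'I_M =>
    (c == a.-1 :> nat)%:R * ((0 < a)%:R * 'C(M - b, M - c.+1)%:R)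
    + (c == a :> nat)%:R * 'C(M - b, M - c.+1)%:R)); last first.
  move=> c _; case: a => [[|a] ha] /=; first by rewrite mul0r mulr0 add0r.
  rewrite !eqSS mul1r; case: eqP => [->|_] /=; last by rewrite mul0r add0r.
  by rewrite (ltn_eqF (ltnSn a)) mul1r mul0r addr0.
rewrite big_split /=.
rewrite (sum_ord_indicator M a.-1 (fun c => (0 < a)%:R * 'C(M - b, M - c.+1)%:R)).
rewrite (sum_ord_indicator M a (fun c => 'C(M - b, M - c.+1)%:R)) -!subnS.
case: a => [[|a] ha] /=; first by rewrite !mul0r mulr0 add0r subn1.
by rewrite (ha : (a < M)%N) !mul1r.
Qed.

Lemma binS_natr N j :
  'C(N.+1, j)%:R = 'C(N, j)%:R + (0 < j)%:R * 'C(N, j.-1)%:R :> k.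
Proof. by case: j => [|j]; rewrite ?bin0 ?mul0r ?addr0 // binS natrD mul1r addrC. Qed.

Lemma twisted_pascal_identity M N j : (N <= M)%N -> (j <= M)%N ->
  ((j == M)%:R - 'C(M.+1, j)%:R) * 'C(N, M)%:R
    + (j < M)%:R * 'C(N, j)%:R + (0 < j)%:R * 'C(N, j.-1)%:R
  = (N < M)%:R * 'C(N.+1, j)%:R :> k.
Proof.
(* By Pascal's rule the left side is C(N+1, j) - C(M+1, j) C(N, M), and
   C(N, M) vanishes unless N = M, where the right side vanishes too. *)
move=> hNM hjM; rewrite binS_natr ltn_neqAle hjM andbT.
have [NltM | MleN] := ltnP N M.
  rewrite (bin_small NltM) mulr0 add0r mul1r.
  by case: eqVneq => [->|_]; rewrite ?(bin_small NltM) ?mul0r ?mul1r.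
have -> : N = M by apply/eqP; rewrite eqn_leq hNM MleN.
rewrite binn mulr1 mul0r binS_natr.
by case: eqVneq => [->|_] /=; rewrite ?binn ?mul0r ?mul1r; ring.
Qed.

Lemma twisted_jordan_block_pascal M :
  twisted_jordan_block M *m pascal_mx M = pascal_mx M *m jordan_block k M.+1.
Proof.
apply/matrixP => a b; rewrite twisted_jordan_block_pascalE pascal_jordan_blockE.
have ha := leq_ord a; have hb := leq_ord b.
have := @twisted_pascal_identity M (M - b) (M - a) (leq_subr _ _) (leq_subr _ _).
have -> : (M - a == M)%N = (a == 0 :> nat) by apply/eqP/eqP => ?; lia.
have -> : (M - a < M)%N = (0 < a)%N by apply/idP/idP => ?; lia.
have -> : (0 < M - a)%N = (a < M)%N by apply/idP/idP => ?; lia.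
by have -> : (M - b < M)%N = (0 < b)%N by apply/idP/idP => ?; lia.
Qed.
End JordanBlock.

Lemma pascal_mx_unit (k : comUnitRingType) M : pascal_mx k M \in unitmx.
Proof.
rewrite unitmxE det_trig.
  by rewrite big1 ?unitr1 // => a _; rewrite mxE binn.
apply/forallP => a; apply/forallP => b; apply/implyP => ltab.
by rewrite mxE bin_small //; have := ltn_ord b; lia.
Qed.

Fixpoint jordan_blocks (k : nzRingType) (la : seq nat) : 'M[k]_(sumn la) :=
  if la is m :: l then block_mx (jordan_block k m) 0 0 (jordan_blocks k l) else 0.

Lemma block_starts_cons m l :
  block_starts (m :: l) = 0%N :: map (addn m) (block_starts l).
Proof.
rewrite /block_starts /= -map_comp (iotaDl 1 1) -map_comp.
by do 2 congr (_ :: _); apply: eq_map => t /=.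
Qed.

Lemma jordan_nilE (k : nzRingType) la : jordan_nil k (sumn la) la = jordan_blocks k la.
Proof.
have start0 l : 0%N \in block_starts l by rewrite /block_starts /= inE take0.
elim: la => [|m l IHl] /=; first by apply/matrixP => [[]].
apply/matrixP => a b; rewrite -(splitK a) -(splitK b).
case: (split a) => x; case: (split b) => y;
  rewrite ?block_mxEul ?block_mxEur ?block_mxEdl ?block_mxEdr !mxE /= block_starts_cons inE.
- case: eqP => [ey|_] //; rewrite ey /=.
  have /negbTE -> // : x.+1 \notin map (addn m) (block_starts l).
  by apply/mapP => -[z _]; have := ltn_ord y; lia.
- case: eqP => [ey|_] //; have -> : (m + y = m + 0)%N by have := ltn_ord x; lia.
  by rewrite (mem_map (@addnI m)) start0 orbT.
- by case: eqP => [ey|_] //; have := ltn_ord y; lia.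
- rewrite -IHl !mxE -addnS eqn_add2l (mem_map (@addnI m)).
  by case: eqP => [->|] //=; rewrite addnS.
Qed.

Definition upper_triangular_on (k : nzRingType) n (K : {set 'I_n}) (Y : 'M[k]_n) :=
  {in K &, forall a b : 'I_n, (b < a)%N -> Y a b = 0}.

Section StableRank.
Variable k : idomainType.

Lemma principal_minor_triangular m (Y : 'M[k]_m) (S : {set 'I_m}) :
  upper_triangular_on setT Y -> principal_minor Y S = \prod_(a in S) Y a a.
Proof.
move=> triY; rewrite /principal_minor -det_tr det_trig.
  by rewrite [RHS]big_enum_val; apply: eq_bigr => a _; rewrite !mxE.
apply/forallP => a; apply/forallP => b; apply/implyP => lt_ab.
by rewrite !mxE triY ?inE ?enum_val_ltn.
Qed.

Lemma stable_rank_triangular m (Y : 'M[k]_m) :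
  upper_triangular_on setT Y -> stable_rank Y = #|[set a | Y a a != 0]|.
Proof.
move=> triY; set Sup := [set a | Y a a != 0].
have minor_eq0 (S : {set 'I_m}) : ~~ (S \subset Sup) -> principal_minor Y S = 0.
  case/subsetPn => a aS; rewrite inE negbK => /eqP Yaa0.
  by rewrite principal_minor_triangular // (bigD1 a) //= Yaa0 mul0r.
have s_gt j : (#|Sup| < j)%N -> sum_pminors Y j = 0.
  move=> lt_j; rewrite /sum_pminors big1 // => S /eqP cardS; apply: minor_eq0.
  by apply: contraTN lt_j => /subset_leq_card; rewrite cardS -leqNgt.
have s_card : sum_pminors Y #|Sup| = \prod_(a in Sup) Y a a.
  rewrite /sum_pminors (bigD1 Sup) //= [X in _ + X]big1 ?addr0;
    first by rewrite principal_minor_triangular.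
  move=> S /andP [/eqP cardS neS]; apply: minor_eq0.
  by apply: contra neS => subS; rewrite eqEcard subS cardS leqnn.
have s_card_neq0 : sum_pminors Y #|Sup| != 0.
  by rewrite s_card prodf_seq_neq0; apply/allP => a _; apply/implyP; rewrite inE.
apply/eqP; rewrite eqn_leq; apply/andP; split.
  apply/bigmax_leqP => j; apply: contraR; rewrite -ltnNge => /s_gt ->.
  by rewrite eqxx.
have lt_Sup : (#|Sup| < m.+1)%N by rewrite ltnS -[m in (_ <= m)%N]card_ord max_card.
exact: (leq_bigmax_cond (Ordinal lt_Sup)).
Qed.

Lemma stable_rank_principal_submx n (K : {set 'I_n}) (Y : 'M[k]_n) :
  upper_triangular_on K Y ->
  stable_rank (\matrix_(a, b) Y (enum_val a) (enum_val b) : 'M_#|K|)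
  = #|[set a in K | Y a a != 0]|.
Proof.
move=> triY; rewrite stable_rank_triangular; last first.
  by move=> a b _ _ lt_ba; rewrite mxE triY ?enum_valP ?enum_val_ltn.
rewrite -(card_imset _ enum_val_inj); apply: eq_card => x; rewrite inE.
apply/imsetP/andP => [[a] | [Kx Yxx]].
  by rewrite inE mxE => Yaa ->; rewrite enum_valP.
by exists (enum_rank_in Kx x); rewrite ?inE ?mxE enum_rankK_in.
Qed.
End StableRank.

Section TriangularConjugate.
Variable k : fieldType.

Definition triangular_conjugate n (J : 'M[k]_n) (c d : nat) :=
  exists Y, exists2 K : {set 'I_n}, similar_in unitmx J Y &
    [/\ #|K| = c, upper_triangular_on K Y & #|[set a in K | Y a a != 0]| = d].

Lemma triangular_conjugate_block m n (J1 : 'M[k]_m) (J2 : 'M[k]_n) c1 c2 d1 d2 :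
  triangular_conjugate J1 c1 d1 -> triangular_conjugate J2 c2 d2 ->
  triangular_conjugate (block_mx J1 0 0 J2) (c1 + c2) (d1 + d2).
Proof.
move=> [Y1 [K1 [P1 uP1 /(similarP uP1) eP1] [cK1 tY1 dY1]]].
move=> [Y2 [K2 [P2 uP2 /(similarP uP2) eP2] [cK2 tY2 dY2]]].
have uP : block_mx P1 0 0 P2 \in unitmx.
  by rewrite unitmxE det_ublock unitrM -!unitmxE uP1 uP2.
exists (block_mx Y1 0 0 Y2); exists (block_set K1 K2).
  exists (block_mx P1 0 0 P2) => //; apply/(similarP uP).
  by rewrite !mulmx_block !mulmx0 !mul0mx !addr0 !add0r eP1 eP2.
split; first by rewrite card_block_set cK1 cK2.
  move=> a b; rewrite -[a]splitK -[b]splitK !inE !unsplitK.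
  case: (split a) => x; case: (split b) => y /= Kx Ky;
    rewrite ?block_mxEul ?block_mxEur ?block_mxEdl ?block_mxEdr ?mxE //.
  - exact: tY1.
  - by rewrite ltn_add2l; apply: tY2.
rewrite -dY1 -dY2 -card_block_set; apply: eq_card => a.
by rewrite -[a]splitK !inE !unsplitK; case: (split a) => x /=;
  rewrite ?block_mxEul ?block_mxEdr inE.
Qed.

Lemma triangular_conjugate_jordan_block m : triangular_conjugate (jordan_block k m) m 0.
Proof.
exists (jordan_block k m); exists setT.
  by exists 1%:M; [exact: unitmx1 | apply/similarP; rewrite ?unitmx1 ?mul1mx ?mulmx1].
split; first by rewrite cardsT card_ord.
  by move=> a b _ _ ltba; rewrite mxE; case: eqP => // eb; exfalso; lia.
by apply: eq_card0 => a; rewrite !inE mxE (ltn_eqF (ltnSn a)) eqxx.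
Qed.

Lemma triangular_conjugate_twisted M r : (0 < r)%N ->
  triangular_conjugate (jordan_block k M.+1) (M.+1 - r) (M.+1 - r).
Proof.
move=> r_gt0; pose K := [set a : 'I_M.+1 | r <= a]%N.
have cardK : #|K| = (M.+1 - r)%N.
  rewrite -sum1_card (eq_bigl (fun a : 'I_M.+1 => true && (r <= a)%N)); last first.
    by move=> a; rewrite inE.
  by rewrite -(big_geq_mkord _ _ xpredT (fun _ => 1%N)) sum_nat_const_nat muln1.
exists (twisted_jordan_block k M); exists K.
  exists (pascal_mx k M); first exact: pascal_mx_unit.
  by apply/similarP; [exact: pascal_mx_unit | rewrite twisted_jordan_block_pascal].
have diag1 a : a \in K -> twisted_jordan_block k M a a = 1.
  by rewrite inE mxE eqxx => ra; have -> : (a == 0 :> nat) = false by lia.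
split => //.
  move=> a b; rewrite !inE => ra rb ltba; rewrite mxE.
  have -> : (b == 0 :> nat) = false by lia.
  by have -> : (b == a :> nat) || (b == a.+1 :> nat) = false by lia.
rewrite -cardK; apply: eq_card => a; rewrite !inE.
by case: (boolP (r <= a)%N) => //= ra; rewrite diag1 ?oner_neq0 // inE.
Qed.

Lemma triangular_conjugate_jordan_blocks (la : seq nat) o :
  0%N \notin la -> (o <= sumn la)%N ->
  triangular_conjugate (jordan_blocks k la) (sumn la - o) (sumn la - o - sumn (drop o la)).
Proof.
elim: la o => [|m l IHl] o /=.
  move=> _; rewrite leqn0 => /eqP ->.
  by have := triangular_conjugate_jordan_block 0; rewrite flatmx0.
rewrite inE negb_or eq_sym => /andP [m_gt0 l0] le_o.
case: o le_o => [|o] le_o.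
  have := triangular_conjugate_block (triangular_conjugate_jordan_block m)
                                     (IHl 0%N l0 (leq0n _)).
  by rewrite !subn0 !drop0 /= !subnn.
case: m m_gt0 le_o => [//|M] _ le_o.
(* The first block drops r = 1 index, or more when the others have fewer than o. *)
pose o' := minn o (sumn l); pose r := (o.+1 - o')%N.
have r_gt0 : (0 < r)%N by rewrite /r /o'; lia.
suff [-> ->] : (M.+1 + sumn l - o.+1 = M.+1 - r + (sumn l - o'))%N /\
    (M.+1 + sumn l - o.+1 - sumn (drop o l)
     = M.+1 - r + (sumn l - o' - sumn (drop o' l)))%N.
  exact: triangular_conjugate_block (triangular_conjugate_twisted M r_gt0)
                                    (IHl o' l0 (geq_minr _ _)).
have le_size := size_le_sumn l0; rewrite /r /o'; have [le_ol | lt_lo] := leqP o (sumn l).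
  have := leq_sumn_take l0 le_ol.
  have : sumn l = (sumn (take o l) + sumn (drop o l))%N by rewrite -sumn_cat cat_take_drop.
  lia.
by rewrite !drop_oversize // /=; lia.
Qed.

Lemma triangular_conjugate_lead_submx n (J : 'M[k]_n) i d (le_in : (i <= n)%N) :
  triangular_conjugate J i d ->
  exists2 X, similar_in unitmx J X & stable_rank (lead_submx le_in X) = d.
Proof.
move=> [Y [K [P uP /(similarP uP) ePJ] [cardK triY <-]]]; subst i.
have [s sE] := perm_enum_val K.
have uSP : perm_mx s *m P \in unitmx by rewrite unitmx_mul unitmx_perm uP.
exists (perm_mx s *m Y *m perm_mx s^-1).
  exists (perm_mx s *m P) => //; apply/(similarP uSP).
  by rewrite -!mulmxA ePJ (mulmxA (perm_mx s^-1)) -perm_mxM mulVg perm_mx1 mul1mx.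
rewrite -(stable_rank_principal_submx triY); congr stable_rank; apply/matrixP => a b.
rewrite -row_permE -col_permE !mxE.
rewrite (sE (widen_ord le_in a) (ltn_ord a)) (sE (widen_ord le_in b) (ltn_ord b)).
have ordK (c : 'I_#|K|) : Ordinal (ltn_ord c) = c by apply: val_inj.
by rewrite !ordK.
Qed.
End TriangularConjugate.

Theorem lemma2p3 (k : closedFieldType) (n : nat) (la : seq nat)
  (hla : is_partition n la) (i : nat) (hi1 : (1 <= i)%N) (hin : (i < n)%N) :
  exists X : 'M[k]_n,
    @nil_orbit k n la X /\ stable_rank (lead_submx (ltnW hin) X) = d_lam n la i.
Proof.
case/and3P: hla => _ la0 /eqP sum_la; subst n.
have le_o := leq_subr i (sumn la).
have := triangular_conjugate_jordan_blocks k la0 le_o.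
rewrite subKn ?(ltnW hin) // -jordan_nilE.
move=> /(triangular_conjugate_lead_submx (ltnW hin)) [X [P uP /(similarRL uP) ->] rkX].
exists (P *m jordan_nil k (sumn la) la *m invmx P); split; first by exists P.
by rewrite rkX /d_lam -sumn_drop // size_le_sumn.
Qed.
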